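(* Let $E$ be a contact Riemannian Lie algebroid with associated almost contact Riemannian structure $(F_E,\xi,\eta,g_E)$, and let $\nabla$ be the Levi-Civita connection of $g_E$. Then: (i) $N_E^{(2)}=0$ and $N_E^{(4)}=0$; (ii) $N_E^{(3)}=0$ if and only if $\xi$ is a Killing section, i.e. $\mathcal{L}_\xi g_E=0$; (iii) $\nabla_\xi F_E=0$.
   Context: A Lie algebroid $(E,\rho_E,[\cdot,\cdot]_E)$ over $M$ is a vector bundle with anchor $\rho_E:E\to TM$ and Lie bracket on $\Gamma(E)$ with $[s_1,fs_2]_E=f[s_1,s_2]_E+\rho_E(s_1)(f)s_2$. For a 1-form $\eta$, $(d_E\eta)(s_1,s_2)=\frac12\{\rho_E(s_1)(\eta(s_2))-\rho_E(s_2)(\eta(s_1))-\eta([s_1,s_2]_E)\}$. For $E$ of rank $2m+1$, an almost contact Riemannian structure $(F_E,\xi,\eta,g_E)$: endomorphism $F_E$, $\xi\in\Gamma(E)$, $\eta\in\Gamma(E^* )$, bundle metric $g_E$, with $F_E^2=-I_E+\eta\otimes\xi$, $\eta(\xi)=1$, $g_E(F_Es_1,F_Es_2)=g_E(s_1,s_2)-\eta(s_1)\eta(s_2)$; fundamental form $\Omega_E(s_1,s_2)=g_E(s_1,F_Es_2)$. $E$ is contact Riemannian if also $\eta\wedge(d_E\eta)^m$ vanishes nowhere and $d_E\eta=\Omega_E$. Lie derivatives along $s\in\Gamma(E)$: $(\mathcal{L}_s\eta)(s')=\rho_E(s)(\eta(s'))-\eta([s,s']_E)$; $(\mathcal{L}_sF_E)(s')=[s,F_Es']_E-F_E[s,s']_E$;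 $(\mathcal{L}_sg_E)(s_1,s_2)=\rho_E(s)(g_E(s_1,s_2))-g_E([s,s_1]_E,s_2)-g_E(s_1,[s,s_2]_E)$. Define $N_E^{(2)}(s_1,s_2)=(\mathcal{L}_{F_E(s_1)}\eta)(s_2)-(\mathcal{L}_{F_E(s_2)}\eta)(s_1)$, $N_E^{(3)}=\frac12\mathcal{L}_\xi F_E$, $N_E^{(4)}=\mathcal{L}_\xi\eta$. The Levi-Civita connection $\nabla$ is the unique $E$-connection ($\nabla_{fs}s'=f\nabla_ss'$, $\nabla_s(fs')=f\nabla_ss'+\rho_E(s)(f)s'$) that is torsion-free ($\nabla_{s_1}s_2-\nabla_{s_2}s_1=[s_1,s_2]_E$) and metric ($\rho_E(s)(g_E(s_1,s_2))=g_E(\nabla_ss_1,s_2)+g_E(s_1,\nabla_ss_2)$); $(\nabla_sF_E)s'=\nabla_s(F_Es')-F_E(\nabla_ss')$. *)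

(* Algebraic (Lie--Rinehart style) model of a Lie algebroid
   over a smooth manifold M: C^oo(M) is an abstract commutative R-algebra
   equipped with point evaluations, Gamma(E) is a module over it. *)
From HB Require Import structures.
From mathcomp Require Import all_boot all_order all_algebra.
From mathcomp Require Import fingroup perm.
From mathcomp Require Import reals.
Set Implicit Arguments. Unset Strict Implicit. Unset Printing Implicit Defensive.
Import Order.TTheory GRing.Theory Num.Theory.
Local Open Scope ring_scope.

Record LieAlgebroid (R : realType) := {
  lb_M : Type;
  lb_C : comAlgType R;
  lb_ev : lb_M -> lb_C -> R;
  lb_Sec : lmodType lb_C;
  lb_anchor : lb_Sec -> lb_C -> lb_C;   (* rho_E(s) acting on functions *)
  lb_br : lb_Sec -> lb_Sec -> lb_Sec;
  lb_ev_add : forall p f h, lb_ev p (f + h) = lb_ev p f + lb_ev p h;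
  lb_ev_mul : forall p f h, lb_ev p (f * h) = lb_ev p f * lb_ev p h;
  lb_ev_scale : forall p (c : R) f, lb_ev p (c *: f) = c * lb_ev p f;
  lb_ev_one : forall p, lb_ev p 1 = 1;
  lb_ev_sep : forall f, (forall p, lb_ev p f = 0) -> f = 0;
  (* a section vanishing at every point is zero (vanishing at p defined
     algebraically: s lies in I_p Gamma(E), I_p = functions vanishing at p) *)
  lb_sec_sep : forall s : lb_Sec,
      (forall p, exists (n : nat) (f : 'I_n -> lb_C) (t : 'I_n -> lb_Sec),
          (forall i, lb_ev p (f i) = 0) /\ s = \sum_i f i *: t i) -> s = 0;
  lb_anchor_lin : forall (f : lb_C) s t h,
      lb_anchor (f *: s + t) h = f * lb_anchor s h + lb_anchor t h;
  lb_anchor_add : forall s h1 h2,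
      lb_anchor s (h1 + h2) = lb_anchor s h1 + lb_anchor s h2;
  lb_anchor_scale : forall s (c : R) h, lb_anchor s (c *: h) = c *: lb_anchor s h;
  lb_anchor_mul : forall s h1 h2,
      lb_anchor s (h1 * h2) = h1 * lb_anchor s h2 + lb_anchor s h1 * h2;
  lb_br_addl : forall s1 s2 t, lb_br (s1 + s2) t = lb_br s1 t + lb_br s2 t;
  lb_br_scalel : forall (c : R) s t, lb_br (c%:A *: s) t = c%:A *: lb_br s t;
  lb_br_skew : forall s t, lb_br s t = - lb_br t s;
  lb_br_jacobi : forall s1 s2 s3,
      lb_br s1 (lb_br s2 s3) + lb_br s2 (lb_br s3 s1) + lb_br s3 (lb_br s1 s2) = 0;
  lb_br_leibniz : forall s1 (f : lb_C) s2,
      lb_br s1 (f *: s2) = f *: lb_br s1 s2 + lb_anchor s1 f *: s2;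
  lb_anchor_br : forall s1 s2 h,
      lb_anchor (lb_br s1 s2) h
      = lb_anchor s1 (lb_anchor s2 h) - lb_anchor s2 (lb_anchor s1 h)
}.

Section Defs.
Variables (R : realType) (E : LieAlgebroid R).
Local Notation C := (lb_C E).
Local Notation S := (lb_Sec E).
Local Notation ev := (@lb_ev R E).
Local Notation rho := (@lb_anchor R E).
Local Notation br := (@lb_br R E).

Definition vanishes_at (p : lb_M E) (s : S) : Prop :=
  exists (n : nat) (f : 'I_n -> C) (t : 'I_n -> S),
    (forall i, ev p (f i) = 0) /\ s = \sum_i f i *: t i.

(* E has rank n: every fibre E_p = Gamma(E)/I_p Gamma(E) is n-dimensional *)
Definition has_rank (n : nat) : Prop :=
  forall p : lb_M E, exists e : 'I_n -> S,
    (forall s : S, exists c : 'I_n -> R,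
        vanishes_at p (s - \sum_i (c i)%:A *: e i)) /\
    (forall c : 'I_n -> R,
        vanishes_at p (\sum_i (c i)%:A *: e i) -> forall i, c i = 0).

Definition is_form1 (eta : S -> C) : Prop :=
  forall (f : C) s t, eta (f *: s + t) = f * eta s + eta t.
Definition is_endo (F : S -> S) : Prop :=
  forall (f : C) s t, F (f *: s + t) = f *: F s + F t.
Definition is_bundle_metric (g : S -> S -> C) : Prop :=
  (forall s t, g s t = g t s) /\
  (forall (f : C) s t u, g (f *: s + t) u = f * g s u + g t u) /\
  (forall p s, 0 <= ev p (g s s)) /\
  (forall p s, ev p (g s s) = 0 -> vanishes_at p s).

(* d_E of a 1-form, with the 1/2 convention *)
Definition dE (eta : S -> C) (s1 s2 : S) : C :=
  (2^-1 : R) *: (rho s1 (eta s2) - rho s2 (eta s1) - eta (br s1 s2)).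

Definition fundamental_form (F : S -> S) (g : S -> S -> C) (s1 s2 : S) : C :=
  g s1 (F s2).

Definition almost_contact_Riemannian (F : S -> S) (xi : S) (eta : S -> C)
    (g : S -> S -> C) : Prop :=
  [/\ is_endo F, is_form1 eta, is_bundle_metric g,
      (forall s, F (F s) = - s + eta s *: xi) /\ eta xi = 1 &
      (forall s1 s2, g (F s1) (F s2) = g s1 s2 - eta s1 * eta s2)].

(* value of eta /\ (d_E eta)^m on (s_0,...,s_2m), up to a nonzero constant
   factor (irrelevant for "vanishes nowhere") *)
Definition eta_wedge_deta_pow (m : nat) (eta : S -> C)
    (s : 'I_(m.*2.+1) -> S) : C :=
  \sum_(sg : 'S_(m.*2.+1))
     ((-1) ^+ sg * eta (s (sg ord0)) *
      \prod_(k < m) dE eta (s (sg (inord k.*2.+1))) (s (sg (inord k.*2.+2))))%R.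

Definition vanishes_nowhere_form (m : nat) (omega : ('I_(m.*2.+1) -> S) -> C)
  : Prop :=
  forall p : lb_M E, exists s, ev p (omega s) != 0.

Definition contact_Riemannian (m : nat) (F : S -> S) (xi : S) (eta : S -> C)
    (g : S -> S -> C) : Prop :=
  [/\ has_rank m.*2.+1,
      almost_contact_Riemannian F xi eta g,
      @vanishes_nowhere_form m (@eta_wedge_deta_pow m eta) &
      (forall s1 s2, dE eta s1 s2 = fundamental_form F g s1 s2)].

Definition Lie_form1 (s : S) (eta : S -> C) (s' : S) : C :=
  rho s (eta s') - eta (br s s').
Definition Lie_endo (s : S) (F : S -> S) (s' : S) : S :=
  br s (F s') - F (br s s').
Definition Lie_metric (s : S) (g : S -> S -> C) (s1 s2 : S) : C :=
  rho s (g s1 s2) - g (br s s1) s2 - g s1 (br s s2).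

Definition N2 (F : S -> S) (eta : S -> C) (s1 s2 : S) : C :=
  Lie_form1 (F s1) eta s2 - Lie_form1 (F s2) eta s1.
Definition N3 (F : S -> S) (xi : S) (s : S) : S :=
  (2^-1 : R)%:A *: Lie_endo xi F s.
Definition N4 (xi : S) (eta : S -> C) (s : S) : C :=
  Lie_form1 xi eta s.

Definition is_Levi_Civita (g : S -> S -> C) (nabla : S -> S -> S) : Prop :=
  [/\ (forall (f : C) s t u, nabla (f *: s + t) u = f *: nabla s u + nabla t u),
      (forall s t u, nabla s (t + u) = nabla s t + nabla s u),
      (forall s (f : C) t, nabla s (f *: t) = f *: nabla s t + rho s f *: t),
      (forall s1 s2, nabla s1 s2 - nabla s2 s1 = br s1 s2) &
      (forall s s1 s2, rho s (g s1 s2) = g (nabla s s1) s2 + g s1 (nabla s s2))].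

Definition cov_endo (nabla : S -> S -> S) (s : S) (F : S -> S) (s' : S) : S :=
  nabla s (F s') - F (nabla s s').

End Defs.

(* Everything follows from d_E eta = Omega_E by tensorial algebra.  Since eta
   vanishes on the image of F, evaluating d_E eta on (xi, s) and on (F s1, s2)
   gives L_xi eta = 0 and N^(2) = 0.  Then L_xi Omega_E = L_xi d_E eta = 0,
   i.e. (L_xi g)(Y, F Z) = - g(Y, (L_xi F) Z); as every section is a multiple
   of xi plus a section F W, L_xi g vanishes exactly when L_xi F does, and
   L_xi F is g-symmetric.  Torsion-freeness and metricity give
   2 g(nabla_Y xi, W) = (L_xi g)(Y, W) - 2 g(F Y, W), and with
   (nabla_xi F) Z = (L_xi F) Z + nabla_(F Z) xi - F (nabla_Z xi) all terms of
   g(Y, (nabla_xi F) Z) cancel. *)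

From HB Require Import structures.
From mathcomp Require Import all_boot all_order all_algebra.
From mathcomp Require Import fingroup perm.
From mathcomp Require Import reals.
From mathcomp Require Import ring.
Set Implicit Arguments. Unset Strict Implicit. Unset Printing Implicit Defensive.
Import GRing.Theory Num.Theory.
Local Open Scope ring_scope.

Lemma idem_eq0 (V : zmodType) (x : V) : x = x + x -> x = 0.
Proof. by move/(canLR (addrK x)); rewrite subrr => /esym. Qed.

Lemma eq_of_subr_eq (V : zmodType) (a b c d : V) : a = b -> c - d = a - b -> c = d.
Proof. by move=> ->; rewrite subrr => /subr0_eq. Qed.

Lemma half_add_half (K : numFieldType) : 2^-1 + 2^-1 = 1 :> K.
Proof. by rewrite [RHS]splitr mul1r. Qed.

Lemma double_eq0 (K : numFieldType) (V : lmodType K) (v : V) : v + v = 0 -> v = 0.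
Proof. by move=> vv0; rewrite -[v]scale1r -half_add_half scalerDl -scalerDr vv0 scaler0. Qed.

Section AlgebraHalving.
Variables (K : numFieldType) (A : lalgType K) (V : lmodType A).

Lemma alg_half_add_half : (2^-1 : K)%:A + (2^-1 : K)%:A = 1 :> A.
Proof. by rewrite -scalerDl half_add_half scale1r. Qed.

Lemma alg_double_eq0 (v : V) : v + v = 0 -> v = 0.
Proof.
by move=> vv0; rewrite -[v]scale1r -alg_half_add_half scalerDl -scalerDr vv0 scaler0.
Qed.

Lemma alg_scale_half_eq0 (v : V) : (2^-1 : K)%:A *: v = 0 -> v = 0.
Proof. by move=> hv; rewrite -[v]scale1r -alg_half_add_half scalerDl hv addr0. Qed.

End AlgebraHalving.

Section Algebroid.
Variables (R : realType) (E : LieAlgebroid R).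
Local Notation C := (lb_C E).
Local Notation S := (lb_Sec E).
Local Notation rho := (@lb_anchor R E).
Local Notation br := (@lb_br R E).

Lemma anchor0 s : rho s 0 = 0.
Proof. by apply: idem_eq0; rewrite -lb_anchor_add addr0. Qed.

Lemma anchorN s h : rho s (- h) = - rho s h.
Proof. by apply/eqP; rewrite -addr_eq0 -lb_anchor_add addNr anchor0. Qed.

Lemma anchorB s h1 h2 : rho s (h1 - h2) = rho s h1 - rho s h2.
Proof. by rewrite lb_anchor_add anchorN. Qed.

Lemma anchor1 s : rho s 1 = 0.
Proof. by have := lb_anchor_mul s 1 1; rewrite !mul1r mulr1 => /idem_eq0. Qed.

Lemma br0l s : br 0 s = 0.
Proof. by apply: idem_eq0; rewrite -lb_br_addl addr0. Qed.

Lemma brNl s t : br (- s) t = - br s t.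
Proof. by apply/eqP; rewrite -addr_eq0 -lb_br_addl addNr br0l. Qed.

Lemma brNr s t : br s (- t) = - br s t.
Proof. by rewrite lb_br_skew brNl -lb_br_skew. Qed.

Lemma brDr s t u : br s (t + u) = br s t + br s u.
Proof. by rewrite lb_br_skew lb_br_addl opprD -!lb_br_skew. Qed.

Lemma br_self s : br s s = 0.
Proof. by apply: alg_double_eq0; rewrite {1}lb_br_skew addNr. Qed.

Lemma ev0 p : lb_ev p (0 : C) = 0.
Proof. by apply: idem_eq0; rewrite -lb_ev_add addr0. Qed.

Lemma mulrr_eq0 (a : C) : a * a = 0 -> a = 0.
Proof.
move=> aa0; apply: lb_ev_sep => p; apply/eqP.
by rewrite -[_ == 0]orbb -mulf_eq0 -lb_ev_mul aa0 ev0.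
Qed.

Section Form1.
Variable eta : S -> C.
Hypothesis eta_form : is_form1 eta.

Lemma form1_0 : eta 0 = 0.
Proof. by apply: idem_eq0; have := eta_form 1 0 0; rewrite scaler0 addr0 mul1r. Qed.

Lemma form1D s t : eta (s + t) = eta s + eta t.
Proof. by have := eta_form 1 s t; rewrite scale1r mul1r. Qed.

Lemma form1Z f s : eta (f *: s) = f * eta s.
Proof. by have := eta_form f s 0; rewrite !addr0 form1_0 addr0. Qed.

Lemma form1N s : eta (- s) = - eta s.
Proof. by rewrite -scaleN1r form1Z mulN1r. Qed.

Lemma form1B s t : eta (s - t) = eta s - eta t.
Proof. by rewrite form1D form1N. Qed.

End Form1.

Section Endomorphism.
Variable F : S -> S.
Hypothesis F_endo : is_endo F.

Lemma endo0 : F 0 = 0.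
Proof. by apply: idem_eq0; have := F_endo 1 0 0; rewrite scaler0 addr0 scale1r. Qed.

Lemma endoD s t : F (s + t) = F s + F t.
Proof. by have := F_endo 1 s t; rewrite !scale1r. Qed.

Lemma endoZ f s : F (f *: s) = f *: F s.
Proof. by have := F_endo f s 0; rewrite !addr0 endo0 addr0. Qed.

Lemma endoN s : F (- s) = - F s.
Proof. by rewrite -scaleN1r endoZ scaleN1r. Qed.

Lemma Lie_endoN s w : Lie_endo s F (- w) = - Lie_endo s F w.
Proof. by rewrite /Lie_endo endoN !brNr endoN opprD opprK. Qed.

End Endomorphism.

Section Metric.
Variable g : S -> S -> C.
Hypothesis g_metric : is_bundle_metric g.

Lemma metric_sym a b : g a b = g b a.
Proof. by case: g_metric. Qed.

Lemma metric_forml u : is_form1 (g^~ u).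
Proof. by case: g_metric => _ [g_lin _] f s t; apply: g_lin. Qed.

Lemma metric_formr u : is_form1 (g u).
Proof. by move=> f s t; rewrite !(metric_sym u) metric_forml. Qed.

Lemma metric_nondeg x : (forall y, g y x = 0) -> x = 0.
Proof.
case: g_metric => _ [_ [_ g_def]] gx0; apply: lb_sec_sep => p; apply: g_def.
by rewrite gx0 ev0.
Qed.

Let g0l u := form1_0 (metric_forml u).
Let g0r u := form1_0 (metric_formr u).
Let gDl u := form1D (metric_forml u).
Let gDr u := form1D (metric_formr u).
Let gZl u := form1Z (metric_forml u).
Let gZr u := form1Z (metric_formr u).
Let gNl u := form1N (metric_forml u).
Let gNr u := form1N (metric_formr u).
Let gBl u := form1B (metric_forml u).
Let gBr u := form1B (metric_formr u).

Lemma Lie_metric_sym s a b : Lie_metric s g a b = Lie_metric s g b a.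
Proof.
rewrite /Lie_metric (metric_sym a) (metric_sym (br s a)) (metric_sym a (br s b)).
ring.
Qed.

Lemma Lie_metricDr s a f b c :
  Lie_metric s g a (f *: b + c) = f * Lie_metric s g a b + Lie_metric s g a c.
Proof.
rewrite /Lie_metric !gDr !gZr brDr lb_br_leibniz !gDr !gZr.
by rewrite lb_anchor_add lb_anchor_mul; ring.
Qed.

Section AlmostContact.
Variables (F : S -> S) (xi : S) (eta : S -> C).
Hypotheses (F_endo : is_endo F) (eta_form : is_form1 eta).
Hypothesis FF : forall s, F (F s) = - s + eta s *: xi.
Hypothesis eta_xi : eta xi = 1.
Hypothesis metric_F : forall s1 s2, g (F s1) (F s2) = g s1 s2 - eta s1 * eta s2.

Let FD := endoD F_endo.
Let FZ := endoZ F_endo.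
Let FN := endoN F_endo.
Let eta0 := form1_0 eta_form.
Let etaD := form1D eta_form.
Let etaZ := form1Z eta_form.
Let etaN := form1N eta_form.
Let etaB := form1B eta_form.

Lemma eta_scale_F_xi s : eta s *: F xi = eta (F s) *: xi.
Proof. by have := FF (F s); rewrite {1}(FF s) FD FN FZ => /addrI. Qed.

Lemma F_xi : F xi = 0.
Proof.
move: (eta_scale_F_xi xi); rewrite eta_xi scale1r; set a := eta (F xi) => Fxi.
have : F (F xi) = 0 by rewrite FF eta_xi scale1r addNr.
rewrite Fxi FZ Fxi scalerA => /(congr1 eta).
by rewrite etaZ eta0 eta_xi mulr1 => /mulrr_eq0 ->; rewrite scale0r.
Qed.

Lemma eta_F s : eta (F s) = 0.
Proof.
have := congr1 eta (eta_scale_F_xi s).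
by rewrite F_xi scaler0 eta0 etaZ eta_xi mulr1.
Qed.

Lemma metric_xil s : g xi s = eta s.
Proof.
have := metric_F xi s; rewrite F_xi eta_xi mul1r.
by rewrite g0l => /esym/subr0_eq.
Qed.

Lemma metric_Fl a b : g (F a) b = - g a (F b).
Proof.
have := metric_F a (F b); rewrite eta_F mulr0 subr0 FF gDr gZr gNr.
by rewrite (metric_sym (F a) xi) metric_xil eta_F mulr0 addr0 => <-; rewrite opprK.
Qed.

Lemma metric_Fr a b : g a (F b) = - g (F a) b.
Proof. by rewrite metric_Fl opprK. Qed.

Section Contact.
Hypothesis deta : forall s1 s2, dE eta s1 s2 = fundamental_form F g s1 s2.

Lemma deta_double a b :
  rho a (eta b) - rho b (eta a) - eta (br a b) = g a (F b) + g a (F b).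
Proof.
have := deta a b; rewrite /dE /fundamental_form => <-.
by rewrite -scalerDl half_add_half scale1r.
Qed.

Lemma anchor_xi_eta s : rho xi (eta s) = eta (br xi s).
Proof.
have := deta_double xi s; rewrite eta_xi anchor1 subr0 metric_xil eta_F addr0.
exact: subr0_eq.
Qed.

Lemma N4_eq0 s : N4 xi eta s = 0.
Proof. by rewrite /N4 /Lie_form1 anchor_xi_eta subrr. Qed.

Lemma N2_eq0 s1 s2 : N2 F eta s1 s2 = 0.
Proof.
rewrite /N2 /Lie_form1.
have := deta_double (F s1) s2; have := deta_double (F s2) s1.
rewrite !eta_F !anchor0 !subr0 => -> ->.
by rewrite (metric_sym (F s2)) subrr.
Qed.

(* L_xi (d_E eta) = d_E (L_xi eta) = 0, expanded by hand through the Jacobi identity. *)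
Lemma Lie_deta_xi Y Z :
  rho xi (dE eta Y Z) - dE eta (br xi Y) Z - dE eta Y (br xi Z) = 0.
Proof.
rewrite /dE lb_anchor_scale -!scalerBr.
suff -> : rho xi (rho Y (eta Z) - rho Z (eta Y) - eta (br Y Z))
    - (rho (br xi Y) (eta Z) - rho Z (eta (br xi Y)) - eta (br (br xi Y) Z))
    - (rho Y (eta (br xi Z)) - rho (br xi Z) (eta Y) - eta (br Y (br xi Z))) = 0.
  by rewrite scaler0.
rewrite !anchorB !lb_anchor_br !anchor_xi_eta.
rewrite (lb_br_skew (br xi Y) Z) (lb_br_skew xi Z) brNr !etaN.
have := congr1 eta (lb_br_jacobi xi Y Z); rewrite !etaD eta0 => jacobi.
by rewrite -oppr0 -jacobi; ring.
Qed.

Lemma Lie_Omega_xi Y Z :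
  rho xi (g Y (F Z)) - g (br xi Y) (F Z) - g Y (F (br xi Z)) = 0.
Proof. by have := Lie_deta_xi Y Z; rewrite !deta. Qed.

Lemma Lie_metric_Fr Y Z : Lie_metric xi g Y (F Z) = - g Y (Lie_endo xi F Z).
Proof.
apply/subr0_eq; rewrite -[RHS](Lie_Omega_xi Y Z) /Lie_metric /Lie_endo gBr.
ring.
Qed.

Lemma Lie_metric_xir a : Lie_metric xi g a xi = 0.
Proof.
rewrite /Lie_metric br_self g0r (metric_sym a xi) metric_xil.
by rewrite (metric_sym _ xi) metric_xil anchor_xi_eta subrr subr0.
Qed.

Lemma Lie_metric_LieF a Y : Lie_metric xi g a Y = g a (Lie_endo xi F (F Y)).
Proof.
have decY : Y = eta Y *: xi + F (- F Y) by rewrite FN FF opprD opprK addrCA subrr addr0.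
rewrite {1}decY Lie_metricDr Lie_metric_xir mulr0 add0r Lie_metric_Fr.
by rewrite (Lie_endoN F_endo) gNr opprK.
Qed.

Lemma metric_F_LieF Y Z :
  g (F Z) (Lie_endo xi F (F Y)) = - g Z (Lie_endo xi F Y).
Proof.
rewrite /Lie_endo !gBr (metric_Fr (F Z)) (metric_Fr Z) FF (FF Z).
rewrite brDr brNr lb_br_leibniz br_self scaler0 add0r.
rewrite !gDr !gNr !gZr gDl gNl gZl (metric_sym (F Z) xi) metric_xil eta_F.
rewrite metric_xil -anchor_xi_eta eta_F anchor0.
ring.
Qed.

Lemma metric_LieF_sym Y Z : g Y (Lie_endo xi F Z) = g Z (Lie_endo xi F Y).
Proof.
have := Lie_metric_Fr Y Z.
by rewrite Lie_metric_sym Lie_metric_LieF metric_F_LieF => /oppr_inj ->.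
Qed.

Lemma N3_eq0_Killing :
  (forall s, N3 F xi s = 0) <-> (forall s1 s2, Lie_metric xi g s1 s2 = 0).
Proof.
split=> [N30 s1 s2 | Killing s].
  have LieF0 s : Lie_endo xi F s = 0 by apply: alg_scale_half_eq0; exact: N30.
  by rewrite Lie_metric_LieF LieF0 g0r.
rewrite /N3; suff -> : Lie_endo xi F s = 0 by rewrite scaler0.
apply: metric_nondeg => Y.
by apply/eqP; rewrite -oppr_eq0 -Lie_metric_Fr Killing.
Qed.

Section LeviCivita.
Variable nabla : S -> S -> S.
Hypothesis nabla_torsion : forall s1 s2, nabla s1 s2 - nabla s2 s1 = br s1 s2.
Hypothesis nabla_metric :
  forall s s1 s2, rho s (g s1 s2) = g (nabla s s1) s2 + g s1 (nabla s s2).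

Lemma metric_nabla_xi Y W :
  g (nabla Y xi) W + g (nabla Y xi) W
  = Lie_metric xi g Y W - g (F Y) W - g (F Y) W.
Proof.
have metY := nabla_metric Y xi W; have metW := nabla_metric W xi Y.
have metxi := nabla_metric xi Y W.
rewrite !metric_xil in metY metW.
have dY := deta_double Y W; rewrite -nabla_torsion etaB metY metW in dY.
rewrite /Lie_metric metxi -(nabla_torsion xi Y) -(nabla_torsion xi W) gBl gBr.
rewrite -!metric_Fr (metric_sym Y (nabla W xi)).
by apply: (eq_of_subr_eq dY); ring.
Qed.

Lemma cov_endo_xi_F Z : cov_endo nabla xi F Z = 0.
Proof.
rewrite /cov_endo; apply: metric_nondeg => Y.
have nabla_xi s : nabla xi s = br xi s + nabla s xi by rewrite -nabla_torsion subrK.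
rewrite gBr metric_Fr !nabla_xi !gDr.
rewrite (metric_sym Y (nabla (F Z) xi)) (metric_sym (F Y) (nabla Z xi)).
apply: double_eq0.
have eqFZ := metric_nabla_xi (F Z) Y.
rewrite Lie_metric_sym Lie_metric_Fr (metric_Fl (F Z) Y) in eqFZ.
have eqZ := metric_nabla_xi Z (F Y).
rewrite Lie_metric_Fr (metric_LieF_sym Z Y) in eqZ.
rewrite /Lie_endo gBr (metric_Fr Y (br xi Z)) in eqFZ eqZ.
by apply: (eq_of_subr_eq (f_equal2 +%R eqFZ eqZ)); ring.
Qed.

End LeviCivita.
End Contact.
End AlmostContact.
End Metric.
End Algebroid.

Theorem proposition4p2 (R : realType) (E : LieAlgebroid R) (m : nat)
    (F : lb_Sec E -> lb_Sec E) (xi : lb_Sec E) (eta : lb_Sec E -> lb_C E)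
    (g : lb_Sec E -> lb_Sec E -> lb_C E) (nabla : lb_Sec E -> lb_Sec E -> lb_Sec E) :
  contact_Riemannian m F xi eta g ->
  is_Levi_Civita g nabla ->
  ((forall s1 s2, N2 F eta s1 s2 = 0) /\ (forall s, N4 xi eta s = 0)) /\
  ((forall s, N3 F xi s = 0) <-> (forall s1 s2, Lie_metric xi g s1 s2 = 0)) /\
  (forall s, cov_endo nabla xi F s = 0).
Proof.
case=> _ [F_endo eta_form g_metric [FF eta_xi] metric_F] _ deta.
case=> _ _ _ nabla_torsion nabla_metric.
split; first split.
- exact: (N2_eq0 g_metric F_endo eta_form FF eta_xi deta).
- exact: (N4_eq0 g_metric F_endo eta_form FF eta_xi metric_F deta).
split; first exact: (N3_eq0_Killing g_metric F_endo eta_form FF eta_xi metric_F deta).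
exact: (cov_endo_xi_F g_metric F_endo eta_form FF eta_xi metric_F deta
          nabla_torsion nabla_metric).
Qed.
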